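(* Assume the setting in the context (including conditions (1) and (2) on $\theta_i$) with $\gamma\le1$. Let $\epsilon,\eta\ge0$ and suppose $\tilde x\in\tilde{\mathcal{X}}$ is an $\epsilon$-PNE of $\tilde\Gamma$ satisfying the $\eta$-stability condition with respect to a generator profile $(Z(i,\tilde x))_i$, where $Z(i,\tilde x)=\{x_i^1,\dots,x_i^{d+1}\}$ with corresponding weights $\alpha(i,\tilde x)=(\alpha_i^l)_{l=1}^{d+1}$. Let the players choose random actions $X_i$ independently, with $\mathbb{P}(X_i=x_i^l)=\alpha_i^l$. Then for every $i\in N$, $$\mathbb{E}[f_i(X_i,X_{-i})]\le\mathbb{E}[f_i(x_i,X_{-i})]+\check\epsilon\quad\text{for all }x_i\in\mathcal{X}_i,$$ where $\check\epsilon=\epsilon+\eta+2H\big(\frac{(\sqrt n+1)M\Delta}{n}\big)^\gamma$; i.e. this profile of mixed strategies is an $\check\epsilon$-mixed Nash equilibrium of $\Gamma$.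
   Context: Setting: $N=\{1,\dots,n\}$; for each $i$, $\mathcal{X}_i\subset\mathbb{R}^d$ nonempty, closed, bounded, with diameter $\le\Delta$; $\tilde{\mathcal{X}}_i=\operatorname{conv}(\mathcal{X}_i)$; $\tilde{\mathcal{X}}=\prod_i\tilde{\mathcal{X}}_i$, $\tilde{\mathcal{X}}_{-i}=\prod_{j\ne i}\tilde{\mathcal{X}}_j$. $A_j$ real $q\times d$ matrices with $\|A_j\|_2\le M$. $\Omega\subset\mathbb{R}^q$ a neighborhood of $\{\frac1n\sum_jA_jy_j:y_j\in\tilde{\mathcal{X}}_j\}$; $\theta_i:\mathcal{X}_i\times\Omega\to\mathbb{R}$ with (1) $\theta_i(\cdot,y)$ lower semicontinuous on $\mathcal{X}_i$, (2) $|\theta_i(x_i,y')-\theta_i(x_i,y)|\le H\|y'-y\|^\gamma$ for all $i,x_i,y,y'$ ($H,\gamma>0$). Game $\Gamma$ costs: $f_i(x_i,x_{-i})=\theta_i(x_i,\frac1n\sum_jA_jx_j)$, $x_i\in\mathcal{X}_i$, $x_{-i}\in\tilde{\mathcal{X}}_{-i}$. Convexified game $\tilde\Gamma$: action sets $\tilde{\mathcal{X}}_i$, costs $\tilde f_i(x_i,x_{-i})=\inf\{\sum_{k=1}^{d+1}\alpha^kf_i(z^k,x_{-i}):\alpha\in\mathcal{S}_d,z^k\in\mathcal{X}_i,x_i=\sum_k\alpha^kz^k\}$ ($\mathcal{S}_d$ the probability simplex of $\mathbb{R}^{d+1}$). A generator for $(i,x)$ is a set $Z(i,x)=\{z^1,\ldots,z^{d+1}\}\subset\mathcal{X}_i$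 with weights $\alpha(i,x)\in\mathcal{S}_d$ attaining this infimum. An $\epsilon$-PNE of $\tilde\Gamma$: $x\in\tilde{\mathcal{X}}$ with $\tilde f_i(x_i,x_{-i})\le\tilde f_i(y_i,x_{-i})+\epsilon$ for all $i$, $y_i\in\tilde{\mathcal{X}}_i$. $\eta$-stability with respect to $(Z(i,x))_i$: $\tilde f_i(y_i,x_{-i})\le\tilde f_i(x_i,x_{-i})+\eta$ for all $i$, $y_i\in Z(i,x)$. *)

From HB Require Import structures.
From mathcomp Require Import all_boot all_order all_algebra.
From mathcomp Require Import classical_sets reals exp.
Set Implicit Arguments. Unset Strict Implicit. Unset Printing Implicit Defensive.
Import Order.TTheory GRing.Theory Num.Theory.
Local Open Scope ring_scope.

Section Game.
Variable R : realType.

Definition vnorm (m : nat) (v : 'cV[R]_m) : R := Num.sqrt (\sum_i (v i 0) ^+ 2).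

Definition simplex (k : nat) (a : 'I_k -> R) : Prop :=
  (forall l, 0 <= a l) /\ \sum_l a l = 1.

Definition closed_set (m : nat) (S : 'cV[R]_m -> Prop) : Prop :=
  forall x, (forall e, 0 < e -> exists2 y, S y & vnorm (x - y) < e) -> S x.
Definition bounded_set (m : nat) (S : 'cV[R]_m -> Prop) : Prop :=
  exists r, forall x, S x -> vnorm x <= r.
Definition diam_le (m : nat) (S : 'cV[R]_m -> Prop) (D : R) : Prop :=
  forall x y, S x -> S y -> vnorm (x - y) <= D.
Definition open_set (m : nat) (S : 'cV[R]_m -> Prop) : Prop :=
  forall x, S x -> exists2 e, 0 < e & forall y, vnorm (y - x) < e -> S y.
Definition nbhd_of_set (m : nat) (Om S : 'cV[R]_m -> Prop) : Prop :=
  exists U, [/\ open_set U, (forall y, S y -> U y) & (forall y, U y -> Om y)].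
Definition lsc_on (m : nat) (S : 'cV[R]_m -> Prop) (g : 'cV[R]_m -> R) : Prop :=
  forall x, S x -> forall t, t < g x ->
    exists2 e, 0 < e & forall x', S x' -> vnorm (x' - x) < e -> t < g x'.
Definition opnorm_le (p m : nat) (B : 'M[R]_(p, m)) (M : R) : Prop :=
  forall v : 'cV[R]_m, vnorm (B *m v) <= M * vnorm v.

Definition conv (m : nat) (S : 'cV[R]_m -> Prop) : 'cV[R]_m -> Prop :=
  fun x => exists k (w : 'I_k -> R) (z : 'I_k -> 'cV[R]_m),
    [/\ simplex w, (forall l, S (z l)) & x = \sum_l w l *: z l].

Variables (n d q : nat).
Variable (X : 'I_n -> 'cV[R]_d -> Prop).
Variable (A : 'I_n -> 'M[R]_(q, d)).
Variable (theta : 'I_n -> 'cV[R]_d -> 'cV[R]_q -> R).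

Definition agg (x : 'I_n -> 'cV[R]_d) : 'cV[R]_q := (n%:R)^-1 *: \sum_j A j *m x j.
Definition agg_range : 'cV[R]_q -> Prop :=
  fun y => exists x : 'I_n -> 'cV[R]_d, (forall j, conv (X j) (x j)) /\ y = agg x.

Definition upd (x : 'I_n -> 'cV[R]_d) (i : 'I_n) (y : 'cV[R]_d) : 'I_n -> 'cV[R]_d :=
  fun j => if j == i then y else x j.

Definition cost (i : 'I_n) (x : 'I_n -> 'cV[R]_d) : R := theta i (x i) (agg x).

(* convexified cost tilde f_i(y, x_{-i}); the i-th coordinate of x is ignored *)
Definition tcost (i : 'I_n) (y : 'cV[R]_d) (x : 'I_n -> 'cV[R]_d) : R :=
  inf [set v | exists (a : 'I_d.+1 -> R) (z : 'I_d.+1 -> 'cV[R]_d),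
     [/\ simplex a, (forall k, X i (z k)), y = \sum_k a k *: z k &
         v = \sum_k a k * cost i (upd x i (z k))]].

Definition is_eps_PNE (eps : R) (x : 'I_n -> 'cV[R]_d) : Prop :=
  (forall i, conv (X i) (x i)) /\
  forall i y, conv (X i) y -> tcost i (x i) x <= tcost i y x + eps.

Definition generator (i : 'I_n) (x : 'I_n -> 'cV[R]_d)
  (z : 'I_d.+1 -> 'cV[R]_d) (a : 'I_d.+1 -> R) : Prop :=
  [/\ simplex a, (forall k, X i (z k)), x i = \sum_k a k *: z k &
      \sum_k a k * cost i (upd x i (z k)) = tcost i (x i) x].

Definition eta_stable (eta : R) (x : 'I_n -> 'cV[R]_d) (z : 'I_n -> 'I_d.+1 -> 'cV[R]_d) : Prop :=
  forall i l, tcost i (z i l) x <= tcost i (x i) x + eta.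

(* Independent mixed strategies: X_j = z j l with probability a j l.
   Expectations over the finite product distribution. *)
Definition prob_of (a : 'I_n -> 'I_d.+1 -> R) (p : {ffun 'I_n -> 'I_d.+1}) : R :=
  \prod_j a j (p j).
Definition exp_cost (z : 'I_n -> 'I_d.+1 -> 'cV[R]_d) (a : 'I_n -> 'I_d.+1 -> R)
  (i : 'I_n) : R :=
  \sum_(p : {ffun 'I_n -> 'I_d.+1}) prob_of a p * cost i (fun j => z j (p j)).
Definition exp_dev_cost (z : 'I_n -> 'I_d.+1 -> 'cV[R]_d) (a : 'I_n -> 'I_d.+1 -> R)
  (i : 'I_n) (y : 'cV[R]_d) : R :=
  \sum_(p : {ffun 'I_n -> 'I_d.+1}) prob_of a p * cost i (upd (fun j => z j (p j)) i y).

End Game.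

From Pilot Require Import Defs.
From HB Require Import structures.
From mathcomp Require Import all_boot all_order all_algebra.
From mathcomp Require Import classical_sets reals exp.
From mathcomp Require Import ring lra.
From mathcomp Require boolp topology normedtype.
Import Order.TTheory GRing.Theory Num.Theory.
Local Open Scope ring_scope.

(* Given player i's
   own draw, the aggregate differs from the one obtained when the others play their means xt_j
   by D = n^-1 sum_(j != i) A_j (X_j - xt_j), a sum of independent centred vectors; hence
   E|D|^2 = n^-2 sum_(j != i) E|A_j (X_j - xt_j)|^2 <= (sqrt n M Delta / n)^2, and concavity of
   t |-> t^(gamma/2) turns this into E|D|^gamma <= (sqrt n M Delta / n)^gamma.  By the Hoelder
   condition, the expected cost of the mixed profile is at most
   sum_l a_i^l f_i(z_i^l, xt_-i) + H E|D|^gamma = tilde f_i(xt) + H E|D|^gamma, and a deviation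
   to x costs at least f_i(x, xt_-i) - H E|D|^gamma >= tilde f_i(x, xt_-i) - H E|D|^gamma in
   expectation; the epsilon-PNE inequality between the two convexified costs closes the gap.
   The step tilde f_i(x, xt_-i) <= f_i(x, xt_-i) needs the set under the infimum to be bounded
   below (otherwise [inf] returns a junk value): lower semicontinuity on the compact X_i gives
   that. *)

Section PowRInequalities.
Context {R : realType}.
Implicit Types (u B g : R).

Lemma powR_bernoulli u g : 0 <= u -> 0 < g -> g <= 1 -> u `^ g <= 1 + g * (u - 1).
Proof.
move=> u0 g0 g1; have [->|g_neq1] := eqVneq g 1.
  by rewrite powRr1 // mul1r addrC subrK.
have g_lt1 : g < 1 by rewrite lt_neqAle g_neq1.
have := @conjugate_powR R (u `^ g) 1 g^-1 (1 - g)^-1 (powR_ge0 _ _) ler01.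
rewrite !invr_gt0 subr_gt0 g0 g_lt1 !invrK addrC subrK => /(_ isT isT erefl).
rewrite mulr1 -powRrM mulfV ?gt_eqF // powRr1 // powR1; lra.
Qed.

(* The tangent line at t = B^2 of the concave map t |-> t^(g/2), evaluated at t = u^2. *)
Lemma powR_le_sqr_tangent u B g : 0 <= u -> 0 < B -> 0 < g -> g <= 2 ->
  u `^ g <= B `^ g * (1 + g / 2 * ((u / B) ^+ 2 - 1)).
Proof.
move=> u0 B0 g0 g2; have uB0 : 0 <= u / B by rewrite divr_ge0 // ltW.
rewrite -{1}(divfK (lt0r_neq0 B0) u) powRM ?(ltW B0) // mulrC ler_wpM2l ?powR_ge0 //.
have -> : (u / B) `^ g = ((u / B) ^+ 2) `^ (g / 2).
  by rewrite -powR_mulrn // -powRrM [_ * (g / 2)]mulrC divfK ?pnatr_eq0.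
apply: powR_bernoulli; [exact: sqr_ge0 | lra | lra].
Qed.

Lemma wmean_powR_le (I : finType) (w T : I -> R) B g :
  (forall l, 0 <= w l) -> \sum_l w l = 1 -> (forall l, 0 <= T l) -> 0 <= B ->
  \sum_l w l * T l ^+ 2 <= B ^+ 2 -> 0 < g -> g <= 2 ->
  \sum_l w l * T l `^ g <= B `^ g.
Proof.
move=> w0 w1 T0 B0 wT2 g0 g2; have [B_eq0|B_neq0] := eqVneq B 0.
  have wT2_ge0 l : 0 <= w l * T l ^+ 2 by rewrite mulr_ge0 ?sqr_ge0.
  have sum_eq0 : \sum_l w l * T l ^+ 2 = 0.
    by apply/le_anti; rewrite sumr_ge0 // andbT (le_trans wT2) // B_eq0 expr0n.
  have wT2_eq0 l := psumr_eq0P (fun l _ => wT2_ge0 l) sum_eq0 (i := l) isT.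
  rewrite B_eq0 powR0 ?gt_eqF // big1 // => l _.
  have /eqP := wT2_eq0 l; rewrite mulf_eq0 sqrf_eq0 => /orP[/eqP->|/eqP->].
    by rewrite mul0r.
  by rewrite powR0 ?gt_eqF ?mulr0.
have B_gt0 : 0 < B by rewrite lt_neqAle eq_sym B_neq0.
apply: (@le_trans _ _ (\sum_l w l * (B `^ g * (1 + g / 2 * ((T l / B) ^+ 2 - 1))))).
  by apply: ler_sum => l _; rewrite ler_wpM2l ?powR_le_sqr_tangent.
have -> : \sum_l w l * (B `^ g * (1 + g / 2 * ((T l / B) ^+ 2 - 1))) =
    B `^ g * (1 + g / 2 * ((\sum_l w l * T l ^+ 2) / B ^+ 2 - 1)).
  rewrite (eq_bigr (fun l => B `^ g * ((1 - g / 2) * w l +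
                                g / 2 / B ^+ 2 * (w l * T l ^+ 2)))) => [|l _].
    by rewrite -mulr_sumr big_split /= -!mulr_sumr w1; congr (_ * _); field.
  by field; rewrite lt0r_neq0.
rewrite -[leRHS]mulr1 ler_wpM2l ?powR_ge0 // gerDl pmulr_rle0 ?divr_gt0 //.
by rewrite subr_le0 ler_pdivrMr ?exprn_gt0 // mul1r.
Qed.

End PowRInequalities.

Section IndependentDraws.
Context {R : comPzSemiRingType} {I J : finType} {a : I -> J -> R}.
Hypothesis a1 : forall j, \sum_l a j l = 1.

Lemma indep_mean_prod (P : pred I) (G : I -> J -> R) :
  \sum_(p : {ffun I -> J}) (\prod_j a j (p j)) * \prod_(j | P j) G j (p j) =
  \prod_(j | P j) \sum_l a j l * G j l.
Proof.
pose G' j l := if P j then G j l else 1.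
transitivity (\prod_j \sum_l a j l * G' j l).
  rewrite bigA_distr_bigA; apply: eq_bigr => p _.
  by rewrite big_split /= (big_mkcond P).
rewrite [in RHS](big_mkcond P); apply: eq_bigr => j _; rewrite /G'.
by case: (P j) => //; under eq_bigr do rewrite mulr1.
Qed.

Lemma indep_mass : \sum_(p : {ffun I -> J}) \prod_j a j (p j) = 1.
Proof.
have := indep_mean_prod xpred0 (fun _ _ => 1).
by rewrite !big_pred0_eq; under eq_bigr do rewrite mulr1.
Qed.

Lemma indep_mean1 (j0 : I) (F : J -> R) :
  \sum_(p : {ffun I -> J}) (\prod_j a j (p j)) * F (p j0) = \sum_l a j0 l * F l.
Proof.
have := indep_mean_prod (fun j => j == j0) (fun _ => F).
by rewrite big_pred1_eq => <-; apply: eq_bigr => p _; rewrite big_pred1_eq.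
Qed.

Lemma indep_mean2 (j0 j1 : I) (F0 F1 : J -> R) : j0 != j1 ->
  \sum_(p : {ffun I -> J}) (\prod_j a j (p j)) * (F0 (p j0) * F1 (p j1)) =
  (\sum_l a j0 l * F0 l) * (\sum_l a j1 l * F1 l).
Proof.
move=> j01; pose G j := if j == j0 then F0 else F1.
have prod2 (H : I -> R) : \prod_(j in [set j0; j1]) H j = H j0 * H j1.
  by rewrite big_setU1 ?inE //= big_set1.
have := indep_mean_prod (fun j => j \in [set j0; j1]) G.
rewrite prod2 /G eqxx eq_sym (negbTE j01) => <-.
by apply: eq_bigr => p _; rewrite prod2 eqxx eq_sym (negbTE j01).
Qed.

Lemma indep_second_moment (P : pred I) (f : I -> J -> R) :
  (forall j, \sum_l a j l * f j l = 0) ->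
  \sum_(p : {ffun I -> J}) (\prod_j a j (p j)) * (\sum_(j | P j) f j (p j)) ^+ 2 =
  \sum_(j | P j) \sum_l a j l * f j l ^+ 2.
Proof.
move=> f_mean0.
under eq_bigr do rewrite expr2 big_distrlr mulr_sumr.
rewrite exchange_big; apply: eq_bigr => j Pj.
under eq_bigr do rewrite mulr_sumr.
rewrite exchange_big (bigD1 j) //= [X in _ + X]big1 ?addr0 => [|k /andP[_ kj]].
  by under eq_bigr do rewrite -expr2; exact: (indep_mean1 j (fun l => f j l ^+ 2)).
by rewrite indep_mean2 1?eq_sym // f_mean0 mul0r.
Qed.

End IndependentDraws.

Lemma wmean_sqr_centered_le (R : realDomainType) (I : finType) (w u : I -> R) c :
  \sum_l w l = 1 ->
  \sum_l w l * (u l - \sum_k w k * u k) ^+ 2 <= \sum_l w l * (u l - c) ^+ 2.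
Proof.
move=> w1; set mu := \sum_k w k * u k.
have split_sqr l : w l * (u l - c) ^+ 2 = w l * (u l - mu) ^+ 2
    + (2 * (mu - c) * (w l * u l) - 2 * (mu - c) * mu * w l) + (mu - c) ^+ 2 * w l.
  by ring.
rewrite (eq_bigr _ (fun l _ => split_sqr l)) !big_split /= sumrN -!mulr_sumr w1 -/mu.
by rewrite mulr1 subrr addr0 lerDl mulr1 sqr_ge0.
Qed.

Section EuclideanNorm.
Context {R : realType}.

Lemma vnorm_ge0 {m} (v : 'cV[R]_m) : 0 <= vnorm v.
Proof. exact: sqrtr_ge0. Qed.

Lemma vnorm_sqr {m} (v : 'cV[R]_m) : vnorm v ^+ 2 = \sum_k v k 0 ^+ 2.
Proof. by rewrite sqr_sqrtr // sumr_ge0 // => k _; rewrite sqr_ge0. Qed.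

Lemma vnorm0 m : vnorm (0 : 'cV[R]_m) = 0.
Proof. by rewrite /vnorm big1 ?sqrtr0 // => k _; rewrite mxE expr0n. Qed.

Lemma vnormZ {m} c (v : 'cV[R]_m) : vnorm (c *: v) = `|c| * vnorm v.
Proof.
rewrite /vnorm -sqrtr_sqr -sqrtrM ?sqr_ge0 // mulr_sumr.
by congr Num.sqrt; apply: eq_bigr => k _; rewrite mxE exprMn.
Qed.

Lemma vnorm_coord {m} (v : 'cV[R]_m) k : `|v k 0| <= vnorm v.
Proof.
rewrite /vnorm -sqrtr_sqr ler_sqrt ?sumr_ge0 // => [|k' _]; last exact: sqr_ge0.
by rewrite (bigD1 k) //= lerDl sumr_ge0 // => k' _; exact: sqr_ge0.
Qed.

Lemma wmean_vnorm_centered_le (I : finType) m (w : I -> R) (v : I -> 'cV[R]_m) c :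
  \sum_l w l = 1 ->
  \sum_l w l * vnorm (v l - \sum_k w k *: v k) ^+ 2 <=
  \sum_l w l * vnorm (v l - c) ^+ 2.
Proof.
move=> w1; under eq_bigr do rewrite vnorm_sqr mulr_sumr.
under [leRHS]eq_bigr do rewrite vnorm_sqr mulr_sumr.
rewrite exchange_big [leRHS]exchange_big; apply: ler_sum => k _ /=.
under eq_bigr do rewrite !mxE summxE.
under [leRHS]eq_bigr do rewrite !mxE.
under eq_bigr do under eq_bigr do rewrite mxE.
exact: wmean_sqr_centered_le.
Qed.

End EuclideanNorm.

Lemma indep_second_moment_vnorm (R : realType) (I J : finType) m
    (a : I -> J -> R) (P : pred I) (Y : I -> J -> 'cV[R]_m) :
  (forall j, \sum_l a j l = 1) -> (forall j, \sum_l a j l *: Y j l = 0) ->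
  \sum_(p : {ffun I -> J}) (\prod_j a j (p j)) * vnorm (\sum_(j | P j) Y j (p j)) ^+ 2 =
  \sum_(j | P j) \sum_l a j l * vnorm (Y j l) ^+ 2.
Proof.
move=> a1 Y_mean0.
transitivity (\sum_k \sum_(j | P j) \sum_l a j l * Y j l k 0 ^+ 2); last first.
  rewrite exchange_big; apply: eq_bigr => j _; rewrite exchange_big.
  by apply: eq_bigr => l _; rewrite vnorm_sqr mulr_sumr.
under eq_bigr do rewrite vnorm_sqr mulr_sumr.
rewrite exchange_big; apply: eq_bigr => k _ /=.
rewrite -(indep_second_moment a1 P (fun j l => Y j l k 0)).
  by apply: eq_bigr => p _; rewrite summxE.
move=> j; have := congr1 (fun v : 'cV_m => v k 0) (Y_mean0 j).
by rewrite summxE mxE; under eq_bigr do rewrite mxE.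
Qed.

Section Deviation.
Context {R : realType} {n d q : nat}.
Variable X : 'I_n -> 'cV[R]_d -> Prop.
Variables (A : 'I_n -> 'M[R]_(q, d)) (Delta M : R).
Hypotheses (Xdiam : forall j, diam_le (X j) Delta) (Anorm : forall j, opnorm_le (A j) M).
Hypothesis M0 : 0 <= M.
Variables (z : 'I_n -> 'I_d.+1 -> 'cV[R]_d) (a : 'I_n -> 'I_d.+1 -> R).
Variable xt : 'I_n -> 'cV[R]_d.
Hypotheses (a0 : forall j l, 0 <= a j l) (a1 : forall j, \sum_l a j l = 1).
Hypotheses (zX : forall j l, X j (z j l)) (xtE : forall j, xt j = \sum_l a j l *: z j l).
Variable i : 'I_n.

Definition dev (p : {ffun 'I_n -> 'I_d.+1}) : 'cV[R]_q :=
  n%:R^-1 *: \sum_(j | j != i) A j *m (z j (p j) - xt j).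

Lemma agg_sub_dev (p : {ffun 'I_n -> 'I_d.+1}) (u : 'I_n -> 'cV[R]_d) y :
  u i = y -> (forall j, j != i -> u j = z j (p j)) -> agg A u - agg A (upd xt i y) = dev p.
Proof.
move=> <- uE; rewrite /agg /dev -scalerBr -sumrB (bigD1 i) //= /upd eqxx subrr add0r.
by congr (_ *: _); apply: eq_bigr => j ji; rewrite (negbTE ji) uE // mulmxBr.
Qed.

Lemma player_var_le j :
  \sum_l a j l * vnorm (A j *m (z j l - xt j)) ^+ 2 <= (M * Delta) ^+ 2.
Proof.
have Az_le l : vnorm (A j *m (z j l - z j ord0)) <= M * Delta.
  exact: le_trans (Anorm _ _) (ler_wpM2l M0 (Xdiam j _ _ (zX j l) (zX j ord0))).
have mean_Az : \sum_l a j l *: (A j *m z j l) = A j *m xt j.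
  by rewrite xtE mulmx_sumr; under [RHS]eq_bigr do rewrite -scalemxAr.
have := @wmean_vnorm_centered_le R _ _ (a j) (fun l => A j *m z j l) (A j *m z j ord0) (a1 j).
rewrite mean_Az; under eq_bigr do rewrite -mulmxBr; move/le_trans; apply.
rewrite -[leRHS]mul1r -(a1 j) mulr_suml ler_sum // => l _; rewrite -mulmxBr ler_wpM2l //.
have Az_ge0 := vnorm_ge0 (A j *m (z j l - z j ord0)).
by rewrite lerXn2r ?nnegrE ?Az_le // (le_trans Az_ge0 (Az_le l)).
Qed.

Lemma mean_sqr_dev_le :
  \sum_(p : {ffun 'I_n -> 'I_d.+1}) (\prod_j a j (p j)) * vnorm (dev p) ^+ 2 <=
  (Num.sqrt n%:R * M * Delta / n%:R) ^+ 2.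
Proof.
have n_gt0 : (0 < n)%N by apply: leq_ltn_trans (ltn_ord i).
under eq_bigr do rewrite vnormZ exprMn mulrCA.
rewrite -mulr_sumr (@indep_second_moment_vnorm _ _ _ _ a (fun j => j != i)
  (fun j l => A j *m (z j l - xt j))) // => [|j]; last first.
  under eq_bigr do rewrite scalemxAr scalerBr.
  by rewrite -mulmx_sumr sumrB -scaler_suml a1 scale1r -xtE subrr mulmx0.
apply: (@le_trans _ _ (`|n%:R^-1| ^+ 2 * \sum_(j : 'I_n) (M * Delta) ^+ 2)).
  rewrite ler_wpM2l ?sqr_ge0 // [leRHS](bigD1 i) //= -[leLHS]add0r lerD ?sqr_ge0 //.
  by apply: ler_sum => j _; exact: player_var_le.
rewrite sumr_const card_ord -[(M * Delta) ^+ 2 *+ n]mulr_natl ger0_norm ?invr_ge0 ?ler0n //.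
rewrite le_eqVlt; apply/orP; left; apply/eqP.
rewrite !exprMn sqr_sqrtr ?ler0n //; field.
by rewrite pnatr_eq0 -lt0n.
Qed.

Lemma mean_powR_dev_le g : 0 < g -> g <= 2 ->
  \sum_(p : {ffun 'I_n -> 'I_d.+1}) (\prod_j a j (p j)) * vnorm (dev p) `^ g <=
  (Num.sqrt n%:R * M * Delta / n%:R) `^ g.
Proof.
move=> g0 g2; have Delta0 : 0 <= Delta.
  by have := Xdiam i _ _ (zX i ord0) (zX i ord0); rewrite subrr vnorm0.
apply: wmean_powR_le => //; last exact: mean_sqr_dev_le.
- by move=> p; apply: prodr_ge0 => j _.
- exact: indep_mass.
- by move=> p; apply: vnorm_ge0.
- by rewrite mulr_ge0 ?invr_ge0 ?ler0n // !mulr_ge0 ?sqrtr_ge0.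
Qed.

End Deviation.

Section Compactness.
Import boolp topology normedtype numFieldNormedType.Exports.
Context {R : realType}.
Local Open Scope classical_set_scope.

Lemma mxnorm_le_vnorm {m} (w : 'rV[R]_m) : `|w| <= vnorm w^T.
Proof.
rewrite [leLHS]mx_normrE; apply: bigmax_le => [|[i j] _ /=]; first exact: vnorm_ge0.
by rewrite (ord1 i); have := vnorm_coord w^T j; rewrite mxE.
Qed.

Lemma vnorm_lt_of_mxnorm_lt {m} (w : 'rV[R]_m) e :
  0 < e -> `|w| < e / (m%:R + 1) -> vnorm w^T < e.
Proof.
move=> e_gt0 w_lt; have m1_gt0 : 0 < m%:R + 1 :> R by rewrite ltr_pwDr ?ler0n.
apply: (@le_lt_trans _ _ (m%:R * `|w|)).
  rewrite /vnorm -[leRHS]ger0_norm ?mulr_ge0 // -sqrtr_sqr ler_sqrt ?sqr_ge0 //.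
  apply: (@le_trans _ _ (\sum_(k < m) `|w| ^+ 2)).
    apply: ler_sum => k _; rewrite mxE -(real_normK (num_real (w 0 k))) lerXn2r ?nnegrE //.
    rewrite [leRHS]mx_normrE.
    exact: (@le_bigmax _ _ _ 0 (fun ij : 'I_1 * 'I_m => `|w ij.1 ij.2|) (0, k)).
  rewrite sumr_const card_ord -[`|w| ^+ 2 *+ m]mulr_natl exprMn ler_wpM2r ?sqr_ge0 //.
  rewrite -natrX ler_nat.
  by case: m {w w_lt m1_gt0} => // m; rewrite -mulnn leq_pmulr.
apply: (@le_lt_trans _ _ (m%:R * (e / (m%:R + 1)))).
  by rewrite ler_wpM2l ?ler0n // ltW.
by rewrite mulrA ltr_pdivrMr // mulrC ltr_pM2l // ltrDl.
Qed.

(* The library's Heine-Borel theorem is stated for row vectors. *)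
Lemma compact_trmx {m} {S : 'cV[R]_m -> Prop} :
  closed_set S -> Defs.bounded_set S -> compact [set w : 'rV[R]_m | S w^T].
Proof.
move=> Scl [r Sbd]; apply: bounded_closed_compact.
  exists r; split=> [|r' r_lt w Sw /=]; first exact: num_real.
  exact: le_trans (mxnorm_le_vnorm w) (le_trans (Sbd _ Sw) (ltW r_lt)).
move=> w w_cl; apply: Scl => e e_gt0.
have m1_gt0 : 0 < m%:R + 1 :> R by rewrite ltr_pwDr ?ler0n.
have [y [Sy wy]] := w_cl _ (nbhsx_ballx w _ (divr_gt0 e_gt0 m1_gt0)).
exists y^T => //; rewrite -linearB vnorm_lt_of_mxnorm_lt //.
by move: wy; rewrite -ball_normE.
Qed.

Lemma lsc_on_bounded_below {m} {S : 'cV[R]_m -> Prop} {g : 'cV[R]_m -> R} :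
  closed_set S -> Defs.bounded_set S -> lsc_on S g -> exists c, forall x, S x -> c <= g x.
Proof.
move=> Scl Sbd Slsc; have m1_gt0 : 0 < m%:R + 1 :> R by rewrite ltr_pwDr ?ler0n.
have lsc_radius (w : 'rV[R]_m) : exists e : R, 0 < e /\ (S w^T ->
    forall x, S x -> vnorm (x - w^T) < e -> g w^T - 1 < g x).
  have [Sw|] := pselect (S w^T); last by exists 1.
  have := Slsc _ Sw (g w^T - 1); rewrite ltrBlDr ltrDl ltr01 => /(_ isT)[e e_gt0 Se].
  by exists e.
have [r r_spec] := choice lsc_radius.
have r_gt0 w : 0 < r w / (m%:R + 1) by rewrite divr_gt0 //; case: (r_spec w).
have := compact_trmx Scl Sbd; rewrite compact_cover.
move=> /(_ _ [set w | S w^T] (fun w => ball w (r w / (m%:R + 1)))).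
case=> [w _|w Sw|F F_sub F_cov]; [exact: ball_open | by exists w => //; exact: ballxx |].
exists (- \sum_(w <- finmap.enum_fset F) `|g w^T - 1|) => x Sx.
have [w Fw xw] := F_cov x^T (eq_ind_r S Sx (trmxK x)).
have Sw : S w^T by move: (F_sub w Fw); rewrite inE.
have gx_gt : g w^T - 1 < g x.
  apply: (r_spec w).2 => //; rewrite -[x]trmxK -linearB vnorm_lt_of_mxnorm_lt //.
    by case: (r_spec w).
  by rewrite -normrN opprB; move: xw; rewrite -ball_normE.
apply: le_trans (ltW gx_gt); rewrite lerNl.
rewrite (bigD1_seq w Fw (finmap.fset_uniq F)) /=.
apply: le_trans (_ : _ <= `|g w^T - 1|) _; first by rewrite -normrN ler_norm.
by rewrite lerDl sumr_ge0.
Qed.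

End Compactness.

Lemma sub_conv {R : realType} {m} {S : 'cV[R]_m -> Prop} {x} : S x -> conv S x.
Proof.
move=> Sx; exists 1%N, (fun _ => 1), (fun _ => x); split => //.
- by split=> [l|]; rewrite ?big_ord1.
- by rewrite big_ord1 scale1r.
Qed.

Section ConvexifiedCost.
Context {R : realType} {n d q : nat} {X : 'I_n -> 'cV[R]_d -> Prop}.
Context {A : 'I_n -> 'M[R]_(q, d)} {theta : 'I_n -> 'cV[R]_d -> 'cV[R]_q -> R}.

Lemma cost_upd i (u : 'I_n -> 'cV[R]_d) w :
  cost A theta i (upd u i w) = theta i w (agg A (upd u i w)).
Proof. by rewrite /cost /upd eqxx. Qed.

Lemma agg_upd_sub i (u : 'I_n -> 'cV[R]_d) w w' :
  agg A (upd u i w) - agg A (upd u i w') = n%:R^-1 *: (A i *m (w - w')).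
Proof.
rewrite /agg -scalerBr -sumrB (bigD1 i) //= /upd eqxx -mulmxBr big1 ?addr0 //.
by move=> j /negbTE ->; rewrite subrr.
Qed.

Lemma agg_in_nbhd {Om : 'cV[R]_q -> Prop} {u : 'I_n -> 'cV[R]_d} :
  nbhd_of_set Om (agg_range X A) -> (forall j, conv (X j) (u j)) -> Om (agg A u).
Proof. by move=> [U [_ subU UOm]] u_conv; apply/UOm/subU; exists u. Qed.

Lemma tcost_le_cost {i} {u : 'I_n -> 'cV[R]_d} {y c} :
  (forall w, X i w -> c <= cost A theta i (upd u i w)) -> X i y ->
  tcost X A theta i y u <= cost A theta i (upd u i y).
Proof.
move=> cost_ge Xy; apply: ge_inf.
  exists c => _ [b [w [[b0 b1] Xw _ ->]]].
  rewrite -[c]mul1r -b1 mulr_suml; apply: ler_sum => k _.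
  by rewrite ler_wpM2l // cost_ge.
pose e0 (k : 'I_d.+1) : R := (k == ord0)%:R.
have e0_sum (F : 'I_d.+1 -> R) : \sum_k e0 k * F k = F ord0.
  rewrite (bigD1 ord0) //= big1 => [|k /negbTE k0]; last by rewrite /e0 k0 mul0r.
  by rewrite /e0 eqxx mul1r addr0.
have e0_1 : \sum_k e0 k = 1 by under eq_bigr do rewrite -[e0 _]mulr1; exact: e0_sum.
exists e0, (fun _ => y); split=> //.
by rewrite -scaler_suml e0_1 scale1r.
Qed.

End ConvexifiedCost.

Section Game.
Context {R : realType} {n d q : nat} {X : 'I_n -> 'cV[R]_d -> Prop}.
Context {Delta M H gamma : R} {A : 'I_n -> 'M[R]_(q, d)} {Om : 'cV[R]_q -> Prop}.
Context {theta : 'I_n -> 'cV[R]_d -> 'cV[R]_q -> R}.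
Hypotheses (Xcl : forall i, closed_set (X i)) (Xbd : forall i, bounded_set (X i)).
Hypotheses (Xdiam : forall i, diam_le (X i) Delta) (Anorm : forall j, opnorm_le (A j) M).
Hypothesis M0 : 0 <= M.
Hypothesis Om_agg : nbhd_of_set Om (agg_range X A).
Hypothesis theta_lsc : forall i y, Om y -> lsc_on (X i) (fun x => theta i x y).
Hypotheses (H0 : 0 <= H) (gamma_gt0 : 0 < gamma) (gamma_le2 : gamma <= 2).
Hypothesis theta_hoelder : forall {i x y y'}, X i x -> Om y -> Om y' ->
  `|theta i x y' - theta i x y| <= H * vnorm (y' - y) `^ gamma.

Lemma theta_hoelder_le {i w y y'} : X i w -> Om y -> Om y' ->
  theta i w y' <= theta i w y + H * vnorm (y' - y) `^ gamma.
Proof. by move=> Xw Oy Oy'; move: (theta_hoelder Xw Oy Oy'); rewrite ler_distl => /andP[]. Qed.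

Lemma theta_hoelder_ge {i w y y'} : X i w -> Om y -> Om y' ->
  theta i w y - H * vnorm (y' - y) `^ gamma <= theta i w y'.
Proof. by move=> Xw Oy Oy'; move: (theta_hoelder Xw Oy Oy'); rewrite ler_distl => /andP[]. Qed.

Lemma Om_agg_upd {i} {u : 'I_n -> 'cV[R]_d} {w} : (forall j, conv (X j) (u j)) -> X i w ->
  Om (agg A (upd u i w)).
Proof.
move=> u_conv Xw; apply: agg_in_nbhd Om_agg _ => j.
by rewrite /upd; case: eqP => [->|_]; [exact: sub_conv | exact: u_conv].
Qed.

Lemma cost_upd_bounded_below {i} {u : 'I_n -> 'cV[R]_d} {w0} :
  (forall j, conv (X j) (u j)) -> X i w0 ->
  exists c, forall w, X i w -> c <= cost A theta i (upd u i w).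
Proof.
move=> u_conv Xw0.
have [c c_le] := lsc_on_bounded_below (Xcl i) (Xbd i) (theta_lsc i _ (Om_agg_upd u_conv Xw0)).
exists (c - H * (n%:R^-1 * (M * Delta)) `^ gamma) => w Xw.
have agg_le : vnorm (agg A (upd u i w) - agg A (upd u i w0)) <= n%:R^-1 * (M * Delta).
  rewrite agg_upd_sub vnormZ ger0_norm ?invr_ge0 // ler_wpM2l ?invr_ge0 //.
  exact: le_trans (Anorm _ _) (ler_wpM2l M0 (Xdiam i _ _ Xw Xw0)).
rewrite cost_upd.
apply: le_trans (theta_hoelder_ge Xw (Om_agg_upd u_conv Xw0) (Om_agg_upd u_conv Xw)).
rewrite lerB ?c_le // ler_wpM2l // ge0_ler_powR ?nnegrE ?vnorm_ge0 ?(ltW gamma_gt0) //.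
exact: le_trans (vnorm_ge0 _) agg_le.
Qed.

Context {eps : R} {xt : 'I_n -> 'cV[R]_d}.
Context {z : 'I_n -> 'I_d.+1 -> 'cV[R]_d} {a : 'I_n -> 'I_d.+1 -> R}.
Hypothesis xt_PNE : is_eps_PNE X A theta eps xt.
Hypothesis gen : forall i, generator X A theta i xt (z i) (a i).
Variable i : 'I_n.

Let a_ge0 j l : 0 <= a j l. Proof. by case: (gen j) => -[]. Qed.
Let a_sum1 j : \sum_l a j l = 1. Proof. by case: (gen j) => -[]. Qed.
Let zX j l : X j (z j l). Proof. by case: (gen j). Qed.
Let xtE j : xt j = \sum_l a j l *: z j l. Proof. by case: (gen j). Qed.
Let xt_conv j : conv (X j) (xt j). Proof. exact: xt_PNE.1. Qed.

Let mean_dev :=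
  \sum_(p : {ffun 'I_n -> 'I_d.+1}) prob_of a p * vnorm (dev A z xt i p) `^ gamma.

Lemma exp_cost_le_tcost :
  exp_cost A theta z a i <= tcost X A theta i (xt i) xt + H * mean_dev.
Proof.
apply: (@le_trans _ _ (\sum_p prob_of a p *
    (cost A theta i (upd xt i (z i (p i))) + H * vnorm (dev A z xt i p) `^ gamma))).
  apply: ler_sum => p _; rewrite ler_wpM2l ?prodr_ge0 // cost_upd {1}/cost.
  rewrite -(agg_sub_dev A z xt i p (fun j => z j (p j)) (z i (p i))) //.
  apply: theta_hoelder_le; [exact: zX | exact: Om_agg_upd |].
  exact: agg_in_nbhd Om_agg (fun j => sub_conv (zX j (p j))).
under eq_bigr do rewrite mulrDr mulrCA.
case: (gen i) => _ _ _ <-.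
rewrite big_split /= -mulr_sumr.
by rewrite (indep_mean1 a_sum1 i (fun l => cost A theta i (upd xt i (z i l)))).
Qed.

Lemma cost_le_exp_dev_cost x : X i x ->
  cost A theta i (upd xt i x) - H * mean_dev <= exp_dev_cost A theta z a i x.
Proof.
move=> Xx; apply: (@le_trans _ _ (\sum_p prob_of a p *
    (cost A theta i (upd xt i x) - H * vnorm (dev A z xt i p) `^ gamma))).
  under eq_bigr do rewrite mulrBr mulrCA.
  by rewrite sumrB -mulr_suml -mulr_sumr (indep_mass a_sum1) mul1r.
apply: ler_sum => p _; rewrite ler_wpM2l ?prodr_ge0 // !cost_upd.
have dev_eq : agg A (upd (fun j => z j (p j)) i x) - agg A (upd xt i x) = dev A z xt i p.
  by apply: agg_sub_dev => [|j /negbTE ji]; rewrite /upd ?eqxx ?ji.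
rewrite -dev_eq; apply: theta_hoelder_ge; [exact: Xx | exact: Om_agg_upd |].
exact: Om_agg_upd (fun j => sub_conv (zX j (p j))) Xx.
Qed.

Lemma exp_cost_le_exp_dev_cost x : X i x ->
  exp_cost A theta z a i <=
  exp_dev_cost A theta z a i x + (eps + 2 * H * (Num.sqrt n%:R * M * Delta / n%:R) `^ gamma).
Proof.
move=> Xx; have [c c_le] := cost_upd_bounded_below xt_conv Xx.
have tcost_x_le := tcost_le_cost c_le Xx.
have tcost_xt_le := xt_PNE.2 i x (sub_conv Xx).
have exp_cost_le := exp_cost_le_tcost.
have exp_dev_cost_ge := cost_le_exp_dev_cost x Xx.
have mean_dev_le : H * mean_dev <= H * (Num.sqrt n%:R * M * Delta / n%:R) `^ gamma.
  by rewrite ler_wpM2l //; exact: mean_powR_dev_le.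
lra.
Qed.

End Game.

Lemma powR_bound_max0_le (R : realType) (n : nat) (M Delta g : R) :
  0 <= Delta -> 0 < g ->
  (Num.sqrt n%:R * Num.max M 0 * Delta / n%:R) `^ g <=
  ((Num.sqrt n%:R + 1) * M * Delta / n%:R) `^ g.
Proof.
move=> Delta0 g0; have [M0|M_lt0] := leP 0 M.
  have s0 := sqrtr_ge0 (n%:R : R).
  rewrite ge0_ler_powR ?nnegrE ?(ltW g0) //.
  - by rewrite mulr_ge0 ?invr_ge0 ?ler0n // !mulr_ge0.
  - by rewrite mulr_ge0 ?invr_ge0 ?ler0n // !mulr_ge0 ?addr_ge0.
  - by rewrite ler_wpM2r ?invr_ge0 ?ler0n // ler_wpM2r // ler_wpM2r // lerDl.
by rewrite mulr0 !mul0r powR0 ?gt_eqF // powR_ge0.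
Qed.

Theorem proposition3 (R : realType) (n d q : nat)
  (X : 'I_n -> 'cV[R]_d -> Prop) (Delta M H gamma : R)
  (A : 'I_n -> 'M[R]_(q, d)) (Om : 'cV[R]_q -> Prop)
  (theta : 'I_n -> 'cV[R]_d -> 'cV[R]_q -> R) :
  (forall i, exists x, X i x) ->
  (forall i, closed_set (X i)) ->
  (forall i, bounded_set (X i)) ->
  (forall i, diam_le (X i) Delta) ->
  (forall j, opnorm_le (A j) M) ->
  nbhd_of_set Om (agg_range X A) ->
  (forall i y, Om y -> lsc_on (X i) (fun x => theta i x y)) ->
  0 < H -> 0 < gamma ->
  (forall i x y y', X i x -> Om y -> Om y' ->
     `|theta i x y' - theta i x y| <= H * (vnorm (y' - y)) `^ gamma) ->
  gamma <= 1 ->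
  forall (eps eta : R) (xt : 'I_n -> 'cV[R]_d)
         (z : 'I_n -> 'I_d.+1 -> 'cV[R]_d) (a : 'I_n -> 'I_d.+1 -> R),
  0 <= eps -> 0 <= eta ->
  is_eps_PNE X A theta eps xt ->
  (forall i, generator X A theta i xt (z i) (a i)) ->
  eta_stable X A theta eta xt z ->
  forall i x, X i x ->
    exp_cost A theta z a i <=
    exp_dev_cost A theta z a i x
      + (eps + eta + 2 * H * (((Num.sqrt (n%:R) + 1) * M * Delta / n%:R) `^ gamma)).
Proof.
move=> _ Xcl Xbd Xdiam Anorm Om_agg theta_lsc H_gt0 gamma_gt0 theta_hoelder gamma_le1
  eps eta xt z a _ eta_ge0 xt_PNE gen _ i x Xx.
(* [M] may be negative (possible when d = 0), hence the detour through [Num.max M 0]. *)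
have Anorm_max0 j : opnorm_le (A j) (Num.max M 0).
  move=> v; apply: le_trans (Anorm j v) _.
  by rewrite ler_wpM2r ?vnorm_ge0 // le_max lexx.
have max0_ge0 : 0 <= Num.max M 0 by rewrite le_max lexx orbT.
have gamma_le2 : gamma <= 2 by apply: le_trans gamma_le1 _; rewrite ler1n.
have := exp_cost_le_exp_dev_cost Xcl Xbd Xdiam Anorm_max0 max0_ge0 Om_agg theta_lsc
  (ltW H_gt0) gamma_gt0 gamma_le2 theta_hoelder xt_PNE gen i x Xx.
move/le_trans; apply; rewrite lerD2l -addrA lerD2l -[leLHS]add0r lerD //.
rewrite ler_wpM2l ?mulr_ge0 ?(ltW H_gt0) // powR_bound_max0_le //.
by have := Xdiam i x x Xx Xx; rewrite subrr vnorm0.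
Qed.
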